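(* Let $k$ be a field and $p>7$ an odd prime. Let $R^2_p$ be the $k$-algebra generated by $y_0,\dots,y_{p-1}$ (indices taken modulo $p$) with relations $y_i^2=0$ for $0\le i<p$, and $\sum_{i=0}^{p-1}y_iy_{i+k}=0$ for $1\le k\le p-1$. Then $R^2_p$ is infinite-dimensional. *)

(* Free (noncommutative) associative k-algebra on generators
   y_0..y_{p-1}, realised as finitely supported k-valued functions on words
   over the alphabet 'I_p, with concatenation-convolution product. *)
From mathcomp Require Import all_boot all_order all_algebra.
Set Implicit Arguments. Unset Strict Implicit. Unset Printing Implicit Defensive.
Import GRing.Theory.
Local Open Scope ring_scope.

Section NC.
Variables (k : fieldType) (p : nat).

Definition word := seq 'I_p.

Definition ncpoly := word -> k.

(* finite support (equivalently, bounded degree, as the alphabet is finite) *)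
Definition is_ncpoly (f : ncpoly) : Prop :=
  exists N : nat, forall w : word, (N <= size w)%N -> f w = 0.

Definition nc_add (f g : ncpoly) : ncpoly := fun w => f w + g w.
Definition nc_scale (c : k) (f : ncpoly) : ncpoly := fun w => c * f w.
Definition nc_zero : ncpoly := fun _ => 0.
Definition nc_mul (f g : ncpoly) : ncpoly :=
  fun w => \sum_(i < (size w).+1) f (take i w) * g (drop i w).

Definition nc_mon2 (i j : 'I_p) : ncpoly :=
  fun w => (w == [:: i; j])%:R.

Definition rel_sq (i : 'I_p) : ncpoly := nc_mon2 i i.

Definition rel_sum (d : nat) : ncpoly :=
  fun w => \sum_(i < p) (map val w == [:: val i; ((val i + d) %% p)%N])%:R.

Definition R2_rel (r : ncpoly) : Prop :=
  (exists i : 'I_p, r = rel_sq i) \/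
  (exists d : nat, (1 <= d <= p - 1)%N /\ r = rel_sum d).

Inductive in_R2_ideal : ncpoly -> Prop :=
| R2I_gen a r b : is_ncpoly a -> is_ncpoly b -> R2_rel r ->
    in_R2_ideal (nc_mul (nc_mul a r) b)
| R2I_zero : in_R2_ideal nc_zero
| R2I_add f g : in_R2_ideal f -> in_R2_ideal g -> in_R2_ideal (nc_add f g)
| R2I_scale c f : in_R2_ideal f -> in_R2_ideal (nc_scale c f).

Definition R2_infinite_dimensional : Prop :=
  forall (m : nat) (g : 'I_m -> ncpoly), (forall j, is_ncpoly (g j)) ->
    ~ (forall f : ncpoly, is_ncpoly f ->
         exists c : 'I_m -> k,
           in_R2_ideal (fun w => f w - \sum_(j < m) c j * g j w)).

End NC.

From mathcomp Require Import all_boot all_order all_algebra zify.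
Set Implicit Arguments. Unset Strict Implicit. Unset Printing Implicit Defensive.
Import GRing.Theory.
Local Open Scope ring_scope.

(* For p >= 5, sending y_0, ..., y_4 to suitable nilpotent 4 x 4 integer
   matrices and the other generators to 0 kills all defining relations.  The
   relations are homogeneous of degree 2, so evaluating the degree-n component
   of a noncommutative polynomial at these matrices is a linear map vanishing on
   the ideal.  The word (y_0 y_2)^n evaluates to the idempotent E_00, hence is
   nonzero in R^2_p for every n; since finitely many elements of the free
   algebra have bounded degree, they cannot span R^2_p modulo the ideal. *)

Lemma ncpoly_family_bound (k : fieldType) (p m : nat) (g : 'I_m -> ncpoly k p) :
  (forall j, is_ncpoly (g j)) ->
  exists N : nat, forall j w, (N <= size w)%N -> g j w = 0.
Proof.
move=> hg; have [Nj hNj] := fin_all_exists hg.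
exists (\max_(j < m) Nj j) => j w hw; apply: hNj.
exact: leq_trans (leq_bigmax j) hw.
Qed.

Fixpoint words (T : finType) (n : nat) : seq (seq T) :=
  if n is n'.+1 then [seq a :: w | a <- index_enum T, w <- words T n']
  else [:: [::]].

Section Words.
Variable T : finType.

Lemma mem_words n w : (w \in words T n) = (size w == n).
Proof.
elim: n w => [|n IH] [|a w] //=.
- by apply/allpairsP => -[[b v] [_ _]].
- rewrite eqSS -IH; apply/allpairsP/idP => [[[b v] [_ hv [_ ->]]] //|hw].
  by exists (a, w); rewrite mem_index_enum.
Qed.

Lemma words_uniq n : uniq (words T n).
Proof.
elim: n => [|n IH] //=; apply: allpairs_uniq => //; first exact: index_enum_uniq.
by move=> [a w] [b v] _ _ /= [-> ->].
Qed.

Lemma big_words_split (R : Type) (idx : R) (op : Monoid.com_law idx) i j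
    (F : seq T -> seq T -> R) :
  \big[op/idx]_(w <- words T (i + j)) F (take i w) (drop i w) =
  \big[op/idx]_(u <- words T i) \big[op/idx]_(v <- words T j) F u v.
Proof.
elim: i F => [|i IH] F.
  by rewrite add0n big_seq1; apply: eq_bigr => w _; rewrite take0 drop0.
rewrite addSn /= !big_allpairs_dep; apply: eq_bigr => a _ /=.
exact: (IH (fun u v => F (a :: u) v)).
Qed.

End Words.

Section Evaluation.
Variables (k : fieldType) (p : nat) (A : algType k) (X : 'I_p -> A).

Definition monomial (w : word p) : A := \prod_(a <- w) X a.

Lemma monomial_flatten_nseq n u : monomial (flatten (nseq n u)) = monomial u ^+ n.
Proof.
elim: n => [|n IH]; first by rewrite /monomial big_nil expr0.
by rewrite exprS -IH /monomial -big_cat.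
Qed.

Definition eval_deg n (f : ncpoly k p) : A :=
  \sum_(w <- words 'I_p n) f w *: monomial w.

Lemma eval_deg_add n f g : eval_deg n (nc_add f g) = eval_deg n f + eval_deg n g.
Proof. by rewrite -big_split; apply: eq_bigr => w _; rewrite scalerDl. Qed.

Lemma eval_deg_scale n c f : eval_deg n (nc_scale c f) = c *: eval_deg n f.
Proof. by rewrite scaler_sumr; apply: eq_bigr => w _; rewrite scalerA. Qed.

Lemma eval_deg_zero n : eval_deg n (@nc_zero k p) = 0.
Proof. by rewrite /eval_deg big1 // => w _; rewrite scale0r. Qed.

Lemma eval_deg_mul n f g :
  eval_deg n (nc_mul f g) = \sum_(i < n.+1) eval_deg i f * eval_deg (n - i) g.
Proof.
rewrite /eval_deg /nc_mul.
under eq_big_seq => w.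
  rewrite mem_words => /eqP ->; rewrite scaler_suml.
  under eq_bigr => i _ do rewrite -[in monomial w](cat_take_drop i w) /monomial big_cat.
  over.
rewrite exchange_big /=; apply: eq_bigr => -[i /= hi] _.
rewrite -{1}(subnKC (hi : i <= n)%N).
rewrite (big_words_split _ _ _ (fun u v => (f u * g v) *: (monomial u * monomial v))).
rewrite mulr_suml.
apply: eq_bigr => u _; rewrite mulr_sumr; apply: eq_bigr => v _.
by rewrite -scalerAl -scalerAr scalerA.
Qed.

Lemma eval_deg_eq0 n f : (forall w, size w = n -> f w = 0) -> eval_deg n f = 0.
Proof.
move=> f0; rewrite /eval_deg big1_seq // => w /andP[_].
by rewrite mem_words => /eqP/f0 ->; rewrite scale0r.
Qed.

Lemma eval_deg2 f :
  eval_deg 2 f = \sum_(a : 'I_p) \sum_(b : 'I_p) f [:: a; b] *: (X a * X b).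
Proof.
rewrite /eval_deg big_allpairs_dep; apply: eq_bigr => a _.
rewrite big_allpairs_dep; apply: eq_bigr => b _.
by rewrite big_seq1 /monomial !big_cons big_nil mulr1.
Qed.

Lemma eval_deg2_rel_sq i : eval_deg 2 (rel_sq k i) = X i * X i.
Proof.
rewrite eval_deg2 (bigD1 i) //= [X in _ + X]big1 => [|a /negbTE ai]; last first.
  by rewrite big1 // => b _; rewrite /rel_sq /nc_mon2 eqseq_cons ai scale0r.
rewrite (bigD1 i) //= big1 => [|b /negbTE bi]; last first.
  by rewrite /rel_sq /nc_mon2 !eqseq_cons eqxx bi scale0r.
by rewrite /rel_sq /nc_mon2 eqxx scale1r !addr0.
Qed.

Lemma eval_deg2_rel_sum d :
  eval_deg 2 (@rel_sum k p d) =
  \sum_(a : 'I_p) \sum_(b : 'I_p | val b == ((val a + d) %% p)%N) X a * X b.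
Proof.
rewrite eval_deg2; apply: eq_bigr => a _; rewrite [RHS]big_mkcond; apply: eq_bigr => b _.
rewrite /rel_sum (bigD1 a) //= big1 => [|i ia]; last first.
  by rewrite eqseq_cons (inj_eq val_inj) eq_sym (negbTE ia).
rewrite /= addr0 !eqseq_cons eqxx andbT.
by case: eqP; rewrite ?scale1r ?scale0r.
Qed.

Lemma R2_rel_quadratic (r : ncpoly k p) w : R2_rel r -> size w != 2%N -> r w = 0.
Proof.
move=> [[i ->]|[d [_ ->]]] w2.
  by rewrite /rel_sq /nc_mon2; case: eqP => // hw; rewrite hw in w2.
rewrite /rel_sum big1 // => i _; case: eqP => // /(congr1 size).
by rewrite size_map => w2'; rewrite w2' in w2.
Qed.

Lemma eval_deg_indicator w : eval_deg (size w) (fun v => (v == w)%:R) = monomial w.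
Proof.
rewrite /eval_deg (bigD1_seq w) ?words_uniq ?mem_words //= eqxx scale1r.
by rewrite big1 ?addr0 // => v /negbTE ->; rewrite scale0r.
Qed.

Hypothesis X_sq : forall i, X i * X i = 0.
Hypothesis X_cyclic : forall d, (0 < d < p)%N ->
  \sum_(a : 'I_p) \sum_(b : 'I_p | val b == ((val a + d) %% p)%N) X a * X b = 0.

Lemma eval_deg_R2_rel r n : R2_rel r -> eval_deg n r = 0.
Proof.
move=> hr; have [->|n2] := eqVneq n 2; last first.
  by apply: eval_deg_eq0 => w hw; apply: R2_rel_quadratic; rewrite // hw.
case: hr => [[i ->]|[d [hd ->]]]; first by rewrite eval_deg2_rel_sq.
by rewrite eval_deg2_rel_sum X_cyclic //; lia.
Qed.

Lemma eval_deg_R2_ideal n h : in_R2_ideal h -> eval_deg n h = 0.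
Proof.
move=> hh; elim: hh n => [a r b _ _ hr||f g _ IHf _ IHg|c f _ IH] n.
- rewrite eval_deg_mul big1 // => i _; rewrite eval_deg_mul mulr_suml big1 ?mul0r //.
  by move=> j _; rewrite (eval_deg_R2_rel _ hr) mulr0 mul0r.
- exact: eval_deg_zero.
- by rewrite eval_deg_add IHf IHg addr0.
- by rewrite eval_deg_scale IH scaler0.
Qed.

Lemma R2_infinite_dimensional_of_monomials :
  (forall N, exists2 w : word p, (N <= size w)%N & monomial w != 0) ->
  R2_infinite_dimensional k p.
Proof.
move=> long_monomials m g hg hspan.
have [N hN] := ncpoly_family_bound hg.
have [w Nw w0] := long_monomials N.
pose f : ncpoly k p := fun v => (v == w)%:R.
have hf : is_ncpoly f.
  by exists (size w).+1 => v; rewrite /f; case: eqP => // ->; rewrite ltnn.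
have [c hc] := hspan f hf.
have := eval_deg_R2_ideal (size w) hc.
have -> : eval_deg (size w) (fun v => f v - \sum_(j < m) c j * g j v) =
          eval_deg (size w) f.
  apply: eq_big_seq => v; rewrite mem_words => /eqP vw.
  by rewrite big1 ?subr0 // => j _; rewrite hN ?mulr0 // vw.
by rewrite eval_deg_indicator; apply/eqP.
Qed.

End Evaluation.

(* y_0 |-> E_02, y_1 |-> E_03 - E_12, y_2 |-> E_20 - E_13, y_3 |-> E_21 - E_30,
   y_4 |-> -E_31 and y_a |-> 0 for a > 4, in terms of matrix units E_st. *)
Definition ymx_entry (a s t : nat) : int :=
  match a, s, t with
  | 0, 0, 2 => 1
  | 1, 0, 3 => 1 | 1, 1, 2 => -1
  | 2, 1, 3 => -1 | 2, 2, 0 => 1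
  | 3, 2, 1 => 1 | 3, 3, 0 => -1
  | 4, 3, 1 => -1
  | _, _, _ => 0
  end.

Definition ymx (a : nat) : 'M[int]_4 := \matrix_(s, t) ymx_entry a s t.

Lemma ymxE a s t : ymx a s t = ymx_entry a s t.
Proof. exact: mxE. Qed.

Ltac ymx_compute :=
  rewrite ?big_mkcond ?big_ord_recr ?big_ord0 /=;
  apply/matrixP; intros i j; rewrite !mxE ?big_ord_recr ?big_ord0 ?ymxE;
  revert i j; do 2 case=> [[|[|[|[|?]]]] ?] //=.

Lemma ymx_out a : (4 < a)%N -> ymx a = 0.
Proof.
move=> a_gt4; apply/matrixP => s t; rewrite !mxE.
by do 5 (case: a a_gt4 => [|a] //= a_gt4).
Qed.

Lemma ymx_sq a : ymx a *m ymx a = 0.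
Proof.
have [/ymx_out ->|] := ltnP 4 a; first by rewrite mul0mx.
by case: a => [|[|[|[|[|a]]]]] // _; ymx_compute.
Qed.

Lemma sum_ymx_shiftr e : (0 < e)%N -> \sum_(a < 5) ymx a *m ymx (a + e)%N = 0.
Proof.
have [e_gt4 _|] := ltnP 4 e.
  by rewrite big1 // => a _; rewrite (@ymx_out (a + e)%N) ?mulmx0 //; lia.
by case: e => [|[|[|[|[|e]]]]] // _ _; ymx_compute.
Qed.

Lemma sum_ymx_shiftl e :
  (0 < e)%N -> \sum_(a < 5 | (e <= a)%N) ymx a *m ymx (a - e)%N = 0.
Proof.
have [e_gt4 _|] := ltnP 4 e.
  by rewrite big1 // => a e_le_a; have := ltn_ord a; lia.
by case: e => [|[|[|[|[|e]]]]] // _ _; ymx_compute.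
Qed.

Lemma modnD_lt a d p : (a < p)%N -> (d < p)%N ->
  ((a + d) %% p = if p - d <= a then a - (p - d) else a + d)%N.
Proof.
move=> a_lt_p d_lt_p; case: leqP => [wrap|no_wrap]; last by rewrite modn_small //; lia.
have -> : (a + d = a - (p - d) + p)%N by lia.
by rewrite modnDr modn_small //; lia.
Qed.

Lemma ymx_modnD a d p : (4 < p)%N -> (a < 5)%N -> (d < p)%N ->
  ymx ((a + d) %% p) =
  (if (p - d <= a)%N then ymx (a - (p - d)) else 0) + ymx (a + d)%N.
Proof.
move=> p_gt4 a_lt5 d_lt_p; rewrite modnD_lt //; last by lia.
case: leqP => [wrap|_]; last by rewrite add0r.
by rewrite (@ymx_out (a + d)) ?addr0 //; lia.
Qed.

Lemma sum_ymx_cyclic p d : (4 < p)%N -> (0 < d < p)%N ->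
  \sum_(a < p) ymx a *m ymx ((a + d) %% p) = 0.
Proof.
move=> p_gt4 /andP[d_gt0 d_lt_p].
have -> : \sum_(a < p) ymx a *m ymx ((a + d) %% p) =
          \sum_(a < 5) ymx a *m ymx ((a + d) %% p).
  rewrite [RHS](big_ord_widen p (fun a => ymx a *m ymx ((a + d) %% p))) //.
  rewrite [RHS]big_mkcond; apply: eq_bigr => a _.
  by case: ltnP => // a_ge5; rewrite ymx_out ?mul0mx.
under eq_bigr => a _ do rewrite ymx_modnD // mulmxDr.
rewrite big_split /= sum_ymx_shiftr // addr0.
rewrite -[RHS](sum_ymx_shiftl (e := p - d)) ?subn_gt0 // [RHS]big_mkcond.
by apply: eq_bigr => a _; case: ifP; rewrite ?mulmx0.
Qed.

Lemma ymx0_mul_ymx2 : ymx 0 *m ymx 2 = delta_mx ord0 ord0.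
Proof. by ymx_compute. Qed.

Lemma delta_mx_expS (R : pzRingType) n (i : 'I_n.+1) m :
  (delta_mx i i : 'M[R]_n.+1) ^+ m.+1 = delta_mx i i.
Proof. by elim: m => [|m IH]; rewrite ?expr1 // exprS IH -mulmxE mul_delta_mx. Qed.

Lemma delta_mx_neq0 (R : nzRingType) m n (i : 'I_m) (j : 'I_n) :
  delta_mx i j != 0 :> 'M[R]_(m, n).
Proof. by apply/eqP => /matrixP/(_ i j)/eqP; rewrite !mxE !eqxx oner_eq0. Qed.

Section FieldRepresentation.
Variables (k : fieldType) (p : nat).

Definition ymx_in (a : 'I_p) : 'M[k]_4 := map_mx intr (ymx a).

Lemma ymx_in_sq a : ymx_in a * ymx_in a = 0.
Proof. by rewrite -mulmxE -map_mxM ymx_sq map_mx0. Qed.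

Hypothesis p_gt4 : (4 < p)%N.

Lemma ymx_in_cyclic d : (0 < d < p)%N ->
  \sum_(a : 'I_p) \sum_(b : 'I_p | val b == ((val a + d) %% p)%N)
    ymx_in a * ymx_in b = 0.
Proof.
move=> d_range; have p_gt0 : (0 < p)%N by lia.
rewrite -[RHS](map_mx0 (intr : int -> k)) -(sum_ymx_cyclic p_gt4 d_range).
rewrite raddf_sum; apply: eq_bigr => a _.
by rewrite (big_pred1 (Ordinal (ltn_pmod (a + d) p_gt0))) // -mulmxE -map_mxM.
Qed.

Lemma ymx_in_alternating_neq0 (o0 o2 : 'I_p) : val o0 = 0%N -> val o2 = 2%N ->
  forall n, monomial ymx_in (flatten (nseq n.+1 [:: o0; o2])) != 0.
Proof.
move=> o0E o2E n; rewrite monomial_flatten_nseq /monomial !big_cons big_nil mulr1.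
rewrite -mulmxE -map_mxM o0E o2E ymx0_mul_ymx2 map_delta_mx.
by rewrite delta_mx_expS delta_mx_neq0.
Qed.

End FieldRepresentation.

Lemma R2_infinite_dimensional_gt4 (k : fieldType) (p : nat) :
  (4 < p)%N -> R2_infinite_dimensional k p.
Proof.
move=> p_gt4; have [p_gt0 p_gt2] : (0 < p)%N /\ (2 < p)%N by lia.
apply: (R2_infinite_dimensional_of_monomials (@ymx_in_sq k p)).
  exact: ymx_in_cyclic.
move=> N; exists (flatten (nseq N.+1 [:: Ordinal p_gt0; Ordinal p_gt2])).
  by rewrite size_flatten /shape map_nseq sumn_nseq /=; lia.
exact: ymx_in_alternating_neq0.
Qed.

Theorem proposition3p31 (k : fieldType) (p : nat) :
  prime p -> odd p -> (7 < p)%N -> R2_infinite_dimensional k p.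
Proof. by move=> _ _ p_gt7; apply: R2_infinite_dimensional_gt4; lia. Qed.
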